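(* Let $M$ be $\mathbb{E}^2$, $\mathbb{S}^2$ or $\mathbb{H}^2$ with constant curvature $k$ (so $k=0$, $k>0$, $k<0$ respectively). Let $K\subset M$ be a compact region with $C^2$ boundary $\partial K$, and let $\kappa_g$ be the geodesic curvature of $\partial K$. Fix a point $O\in M$ and let $(\rho,\theta)$ be geodesic polar coordinates about $O$. Then the perimeter (length of $\partial K$) is $$\mathcal{P}=\int_{\partial K}\ell(\rho)^2\,\kappa_g\,d\theta+k\int_{\partial K}a(\rho)\,ds .$$
   Context: $\ell(\rho)=L(\rho)/2\pi$ and $a(\rho)=A(\rho)/2\pi$, where $L(\rho)$ and $A(\rho)$ are the circumference and area of a disk of radius $\rho$ in $M$: for $k>0$, $\ell(\rho)=\sin(\sqrt{k}\rho)/\sqrt{k}$, $a(\rho)=(1-\cos(\sqrt{k}\rho))/k$; for $k=0$, $\ell(\rho)=\rho$, $a(\rho)=\rho^2/2$; for $k<0$, $\ell(\rho)=\sinh(\sqrt{-k}\rho)/\sqrt{-k}$, $a(\rho)=(1-\cosh(\sqrt{-k}\rho))/k$. $\partial K$ is oriented positively (counterclockwise, $K$ on the left) and parametrized by arclength $s$, with unit tangent $T$ and outward unit normal $N$; $\kappa_g$ is defined by $\nabla_T T=-\kappa_g N$ (so $\kappa_g\ge 0$ on convex boundaries). The 1-form $\ell(\rho)^2\,d\theta$ extends smoothly across $O$ (and, on $\mathbb{S}^2$, across the point antipodal to $O$), and the first integral is that of this smooth 1-form times $\kappa_g$ along $\partial K$. *)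

From Stdlib Require Import Reals Lra ClassicalEpsilon.
From Coquelicot Require Import Coquelicot.
Open Scope R_scope.

Definition V3 := (R * R * R)%type.
Definition v1 (p : V3) : R := fst (fst p).
Definition v2 (p : V3) : R := snd (fst p).
Definition v3 (p : V3) : R := snd p.
Definition mkV (a b c : R) : V3 := ((a, b), c).
Definition vadd (p q : V3) : V3 := mkV (v1 p + v1 q) (v2 p + v2 q) (v3 p + v3 q).
Definition vscal (c : R) (p : V3) : V3 := mkV (c * v1 p) (c * v2 p) (c * v3 p).
Definition vsub (p q : V3) : V3 := vadd p (vscal (-1) q).
Definition cross (a b : V3) : V3 :=
  mkV (v2 a * v3 b - v3 a * v2 b) (v3 a * v1 b - v1 a * v3 b) (v1 a * v2 b - v2 a * v1 b).
(** Euclidean norm of R^3 (used only for topology of the ambient space) *)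
Definition enorm (p : V3) : R := sqrt (v1 p ^ 2 + v2 p ^ 2 + v3 p ^ 2).

(** * The model space M of constant curvature k
    k > 0 : sphere {p | p.p = 1/k} in Euclidean R^3 (radius 1/sqrt k);
    k = 0 : the plane {p | p_3 = 0} in Euclidean R^3;
    k < 0 : hyperboloid sheet {p | <p,p>_L = 1/k, p_3 > 0} in Minkowski R^{2,1}. *)
Definition eps (k : R) : R := if Rlt_dec k 0 then -1 else 1.
(** ambient bilinear form (Euclidean for k >= 0, Lorentzian for k < 0);
    it restricts to the Riemannian metric of M on tangent vectors *)
Definition B (k : R) (u v : V3) : R := v1 u * v1 v + v2 u * v2 v + eps k * (v3 u * v3 v).
Definition onM (k : R) (p : V3) : Prop :=
  if Req_EM_T k 0 then v3 p = 0 else (B k p p = / k /\ (k < 0 -> 0 < v3 p)).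
(** unit normal of M at p (B(n,n) = eps k) *)
Definition nrm (k : R) (p : V3) : V3 :=
  if Req_EM_T k 0 then mkV 0 0 1 else vscal (sqrt (Rabs k)) p.
Definition tangent (k : R) (p v : V3) : Prop := B k (nrm k p) v = 0.
(** rotation by +pi/2 in T_pM (counterclockwise orientation of M:
    the one induced by the standard orientation of the (x,y)-plane,
    i.e. by the normal nrm) *)
Definition Jrot (k : R) (p v : V3) : V3 :=
  let w := cross (nrm k p) v in mkV (v1 w) (v2 w) (eps k * v3 w).

(** * The functions ell = L/2pi and a = A/2pi of the paper *)
Definition ell (k rho : R) : R :=
  if Rlt_dec 0 k then sin (sqrt k * rho) / sqrt k
  else if Req_EM_T k 0 then rho
  else sinh (sqrt (- k) * rho) / sqrt (- k).
Definition area_a (k rho : R) : R :=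
  if Rlt_dec 0 k then (1 - cos (sqrt k * rho)) / k
  else if Req_EM_T k 0 then rho ^ 2 / 2
  else (1 - cosh (sqrt (- k) * rho)) / k.

(** geodesic of M through p with unit initial velocity u (u tangent at p),
    at time t:  cos(sqrt k t) p + sin(sqrt k t)/sqrt k u, etc.
    (note 1 - k a(t) = cos(sqrt k t), 1, cosh(sqrt(-k) t)) *)
Definition geod (k : R) (p u : V3) (t : R) : V3 :=
  vadd (vscal (1 - k * area_a k t) p) (vscal (ell k t) u).

Definition frame (k : R) (O E1 E2 : V3) : Prop :=
  tangent k O E1 /\ tangent k O E2 /\ B k E1 E1 = 1 /\ B k E2 E2 = 1 /\
  B k E1 E2 = 0 /\ E2 = Jrot k O E1.
Definition Phi (k : R) (O E1 E2 : V3) (r th : R) : V3 :=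
  geod k O (vadd (vscal (cos th) E1) (vscal (sin th) E2)) r.
Definition polar (k : R) (O E1 E2 p : V3) (rt : R * R) : Prop :=
  Phi k O E1 E2 (fst rt) (snd rt) = p /\ 0 <= fst rt /\
  (0 < k -> fst rt <= PI / sqrt k).
Definition polar_of (k : R) (O E1 E2 p : V3) : R * R :=
  epsilon (inhabits (0, 0)) (polar k O E1 E2 p).
Definition rho (k : R) (O E1 E2 p : V3) : R := fst (polar_of k O E1 E2 p).

Definition Dv (g : R -> V3) (s : R) : V3 :=
  mkV (Derive (fun t => v1 (g t)) s) (Derive (fun t => v2 (g t)) s)
      (Derive (fun t => v3 (g t)) s).
Definition C2fun (c : R -> R) : Prop :=
  (forall t, ex_derive c t) /\ (forall t, ex_derive (Derive c) t) /\
  (forall t, continuous (Derive (Derive c)) t).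
Definition C2curve (g : R -> V3) : Prop :=
  C2fun (fun t => v1 (g t)) /\ C2fun (fun t => v2 (g t)) /\ C2fun (fun t => v3 (g t)).

(** The 1-form ell(rho)^2 d theta at p applied to v: since |d_theta| = ell(rho),
    ell^2 dtheta(v) = < v, d Phi / d theta >, evaluated at polar coordinates
    of p.  This is the smooth extension (it vanishes at O and at the antipode). *)
Definition ell2dtheta (k : R) (O E1 E2 p v : V3) : R :=
  let rt := polar_of k O E1 E2 p in
  B k v (Dv (fun th => Phi k O E1 E2 (fst rt) th) (snd rt)).

(** geodesic curvature of a unit-speed curve g in M at s, with the convention
    nabla_T T = - kappa_g N, N = outward normal = - J T (region on the left).
    nabla_T T is the tangential part of the ambient acceleration. *)
Definition covacc (k : R) (g : R -> V3) (s : R) : V3 :=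
  let n := nrm k (g s) in
  let acc := Dv (Dv g) s in
  vsub acc (vscal (B k acc n / B k n n) n).
Definition kappa_g (k : R) (g : R -> V3) (s : R) : R :=
  B k (covacc k g s) (Jrot k (g s) (Dv g s)).

Definition bdryM (k : R) (K : V3 -> Prop) (p : V3) : Prop :=
  onM k p /\ forall e, 0 < e ->
    (exists q, onM k q /\ K q /\ enorm (vsub q p) < e) /\
    (exists q, onM k q /\ ~ K q /\ enorm (vsub q p) < e).
Definition closed3 (K : V3 -> Prop) : Prop :=
  forall p, (forall e, 0 < e -> exists q, K q /\ enorm (vsub q p) < e) -> K p.
Definition bounded3 (K : V3 -> Prop) : Prop :=
  exists C, forall p, K p -> enorm p <= C.

(** K is a compact region of M whose boundary is the disjoint union of the
    n simple closed C^2 curves gam i (i < n), gam i of length L i, parametrized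
    by arclength (L i - periodic), positively oriented (K on the left). *)
Definition compact_region_C2_boundary (k : R) (K : V3 -> Prop) (n : nat)
    (L : nat -> R) (gam : nat -> R -> V3) : Prop :=
  (forall p, K p -> onM k p) /\ closed3 K /\ bounded3 K /\
  (forall i, (i < n)%nat ->
     0 < L i /\ C2curve (gam i) /\
     (forall s, onM k (gam i s)) /\
     (forall s, gam i (s + L i) = gam i s) /\
     (forall s, B k (Dv (gam i) s) (Dv (gam i) s) = 1) /\
     (forall s s', 0 <= s < L i -> 0 <= s' < L i -> gam i s = gam i s' -> s = s') /\
     (forall s, exists d, 0 < d /\ forall t,
         (0 < t < d -> K (geod k (gam i s) (Jrot k (gam i s) (Dv (gam i) s)) t)) /\
         (- d < t < 0 -> ~ K (geod k (gam i s) (Jrot k (gam i s) (Dv (gam i) s)) t)))) /\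
  (forall i j s s', (i < n)%nat -> (j < n)%nat -> i <> j -> gam i s <> gam j s') /\
  (forall p, bdryM k K p <-> exists i s, (i < n)%nat /\ gam i s = p).

Fixpoint sumR (n : nat) (f : nat -> R) : R :=
  match n with O => 0 | S m => sumR m f + f m end.

Definition perimeter (n : nat) (L : nat -> R) : R := sumR n L.

From Stdlib Require Import Reals Lra Lia Nsatz ClassicalEpsilon.
From Coquelicot Require Import Coquelicot.
Open Scope R_scope.

(* In the model, write X = p - O for the ambient chord from the pole and J for the rotation by
   pi/2 of the tangent plane.  Then a(rho) = <X, X>/2, and the 1-form ell(rho)^2 dtheta is
   v |-> <v, J X>, which is visibly smooth at O and at its antipode.  Along a unit-speed boundary
   curve with tangent T and ambient acceleration A, the tangential part of A is kappa_g J T and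
   its normal part is -k p, so pointwise
     ell(rho)^2 dtheta(T) kappa_g + k a(rho) = - <A, X> = 1 - d/ds <T, X>,
   and the derivative integrates to zero over each closed boundary component. *)

Ltac coords :=
  repeat match goal with x : V3 |- _ => destruct x as [[? ?] ?] end;
  unfold B, Jrot, cross, vsub, vadd, vscal, v1, v2, v3, mkV in *; cbn [fst snd] in *.

Lemma V3_eq x y : v1 x = v1 y -> v2 x = v2 y -> v3 x = v3 y -> x = y.
Proof. destruct x as [[? ?] ?], y as [[? ?] ?]; unfold v1, v2, v3; simpl; congruence. Qed.

Lemma eps_0 : eps 0 = 1.
Proof. unfold eps; destruct (Rlt_dec 0 0); lra. Qed.

Lemma eps_sqr k : eps k * eps k = 1.
Proof. unfold eps; destruct (Rlt_dec k 0); ring. Qed.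

Lemma sqrt_Rabs_sqr k : sqrt (Rabs k) * sqrt (Rabs k) = eps k * k.
Proof.
  rewrite sqrt_sqrt by apply Rabs_pos; unfold eps, Rabs.
  destruct (Rcase_abs k), (Rlt_dec k 0); lra.
Qed.

Lemma nrm_0 p : nrm 0 p = mkV 0 0 1.
Proof. unfold nrm; destruct (Req_EM_T 0 0); [reflexivity | lra]. Qed.

Lemma nrm_neq0 k p : k <> 0 -> nrm k p = vscal (sqrt (Rabs k)) p.
Proof. intros Hk; unfold nrm; destruct (Req_EM_T k 0); [contradiction | reflexivity]. Qed.

Lemma onM_0 p : onM 0 p -> v3 p = 0.
Proof. unfold onM; destruct (Req_EM_T 0 0); [auto | lra]. Qed.

Lemma onM_neq0 k p : k <> 0 -> onM k p -> k * B k p p = 1.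
Proof.
  intros Hk; unfold onM; destruct (Req_EM_T k 0) as [|_]; [contradiction|].
  intros [-> _]; field; exact Hk.
Qed.

Lemma onM_neg k p : k < 0 -> onM k p -> 0 < v3 p.
Proof.
  intros Hk; unfold onM; destruct (Req_EM_T k 0); [lra|].
  intros [_ H]; exact (H Hk).
Qed.

Lemma tangent_0 p v : tangent 0 p v -> v3 v = 0.
Proof. unfold tangent; rewrite nrm_0; coords; rewrite eps_0; lra. Qed.

Lemma tangent_neq0 k p v : k <> 0 -> tangent k p v -> B k p v = 0.
Proof.
  intros Hk; unfold tangent; rewrite nrm_neq0 by exact Hk.
  assert (Hs : 0 < sqrt (Rabs k)) by (apply sqrt_lt_R0, Rabs_pos_lt, Hk).
  intros H; replace (B k (vscal (sqrt (Rabs k)) p) v) with (sqrt (Rabs k) * B k p v) in H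
    by (coords; ring).
  apply Rmult_integral in H; destruct H; [lra | assumption].
Qed.

Lemma frame_expansion k O E1 E2 w : onM k O -> frame k O E1 E2 -> tangent k O w ->
  w = vadd (vscal (B k w E1) E1) (vscal (B k w E2) E2).
Proof.
  intros HO Hf Hw.
  destruct Hf as [Ht1 [_ [H11 [_ [_ ->]]]]].
  destruct (Req_dec k 0) as [->|Hk].
  - apply onM_0 in HO; apply tangent_0 in Ht1, Hw.
    unfold Jrot; rewrite nrm_0; rewrite eps_0 in *.
    apply V3_eq; coords; rewrite eps_0 in *; subst; nsatz.
  - apply onM_neq0 in HO; [|exact Hk]. apply tangent_neq0 in Ht1, Hw; try exact Hk.
    unfold Jrot; rewrite nrm_neq0 by exact Hk.
    pose proof (eps_sqr k); pose proof (sqrt_Rabs_sqr k).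
    apply V3_eq; coords; set (e := eps k) in *; set (s := sqrt (Rabs k)) in *; nsatz.
Qed.

Lemma area_a_0 r : area_a 0 r = r ^ 2 / 2.
Proof.
  unfold area_a; destruct (Rlt_dec 0 0); [lra|]; destruct (Req_EM_T 0 0); [reflexivity | lra].
Qed.

Lemma ell_0 r : ell 0 r = r.
Proof.
  unfold ell; destruct (Rlt_dec 0 0); [lra|]; destruct (Req_EM_T 0 0); [reflexivity | lra].
Qed.

Lemma cosh_sqr_sub_sinh_sqr x : cosh x * cosh x - sinh x * sinh x = 1.
Proof.
  unfold cosh, sinh; rewrite exp_Ropp.
  assert (0 < exp x) by apply exp_pos; field; lra.
Qed.

Lemma sqr_div_sqrt a x : 0 < x -> x * (a / sqrt x) ^ 2 = a * a.
Proof.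
  intros Hx; pose proof (sqrt_lt_R0 x Hx); pose proof (sqrt_sqrt x (Rlt_le _ _ Hx)).
  field_simplify_eq; [simpl; nra | lra].
Qed.

Lemma area_a_ell_pythagoras k r : (1 - k * area_a k r) ^ 2 + k * ell k r ^ 2 = 1.
Proof.
  unfold area_a, ell; destruct (Rlt_dec 0 k) as [Hk|Hk].
  - rewrite sqr_div_sqrt by exact Hk.
    replace (1 - k * ((1 - cos (sqrt k * r)) / k)) with (cos (sqrt k * r)) by (field; lra).
    pose proof (sin2_cos2 (sqrt k * r)); unfold Rsqr in *; nra.
  - destruct (Req_EM_T k 0) as [->|Hk0]; [ring|].
    replace (k * (sinh (sqrt (- k) * r) / sqrt (- k)) ^ 2) with
      (- ((- k) * (sinh (sqrt (- k) * r) / sqrt (- k)) ^ 2)) by ring.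
    rewrite sqr_div_sqrt by lra.
    replace (1 - k * ((1 - cosh (sqrt (- k) * r)) / k)) with (cosh (sqrt (- k) * r))
      by (field; lra).
    pose proof (cosh_sqr_sub_sinh_sqr (sqrt (- k) * r)); nra.
Qed.

Lemma cosh_sinh_ln c q : 0 <= q -> c * c - q * q = 1 -> 1 <= c ->
  cosh (ln (c + q)) = c /\ sinh (ln (c + q)) = q.
Proof.
  intros Hq Hcq Hc.
  assert (Hexp : exp (ln (c + q)) = c + q) by (apply exp_ln; lra).
  assert (Hexpm : exp (- ln (c + q)) = c - q)
    by (rewrite exp_Ropp, Hexp; field_simplify_eq; nra).
  unfold cosh, sinh; rewrite Hexp, Hexpm; split; field.
Qed.

Lemma exists_radius k c l : 0 <= l -> c ^ 2 + k * l ^ 2 = 1 -> (k <= 0 -> 1 <= c) ->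
  exists r, 0 <= r /\ (0 < k -> r <= PI / sqrt k) /\ 1 - k * area_a k r = c /\ ell k r = l.
Proof.
  intros Hl Hcl Hc; destruct (Rtotal_order k 0) as [Hk|[->|Hk]].
  - assert (Hsk : 0 < sqrt (- k)) by (apply sqrt_lt_R0; lra).
    assert (Hss : sqrt (- k) * sqrt (- k) = - k) by (apply sqrt_sqrt; lra).
    set (q := sqrt (- k) * l).
    assert (Hq : 0 <= q) by (apply Rmult_le_pos; lra).
    destruct (cosh_sinh_ln c q Hq ltac:(unfold q; nra) ltac:(lra)) as [Hcosh Hsinh].
    exists (ln (c + q) / sqrt (- k)).
    unfold area_a, ell; destruct (Rlt_dec 0 k); [lra|]; destruct (Req_EM_T k 0); [lra|].
    replace (sqrt (- k) * (ln (c + q) / sqrt (- k))) with (ln (c + q)) by (field; lra).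
    rewrite Hcosh, Hsinh; repeat split.
    + apply Rmult_le_pos; [|left; apply Rinv_0_lt_compat; lra].
      rewrite <- ln_1; apply ln_le; lra.
    + lra.
    + field; lra.
    + unfold q; field; lra.
  - exists l; rewrite area_a_0, ell_0; repeat split; try lra.
    assert (c = 1) by nra; lra.
  - assert (Hsk : 0 < sqrt k) by (apply sqrt_lt_R0; lra).
    assert (Hss : sqrt k * sqrt k = k) by (apply sqrt_sqrt; lra).
    assert (Hc1 : -1 <= c <= 1) by (split; nra).
    exists (acos c / sqrt k).
    pose proof (acos_bound c).
    unfold area_a, ell; destruct (Rlt_dec 0 k); [|lra].
    replace (sqrt k * (acos c / sqrt k)) with (acos c) by (field; lra).
    repeat split.
    + apply Rmult_le_pos; [lra | left; apply Rinv_0_lt_compat; lra].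
    + intros _; apply Rmult_le_compat_r; [left; apply Rinv_0_lt_compat|]; lra.
    + rewrite cos_acos by lra; field; lra.
    + rewrite sin_acos by lra.
      replace (1 - c²) with ((sqrt k * l) * (sqrt k * l)) by (unfold Rsqr; nra).
      rewrite sqrt_square by (apply Rmult_le_pos; lra); field; lra.
Qed.

Lemma exists_angle a b l : 0 <= l -> a * a + b * b = l * l ->
  exists th, a = l * cos th /\ b = l * sin th.
Proof.
  intros Hl Hab; destruct (Req_dec l 0) as [->|Hl0].
  - exists 0; split; nra.
  - set (x := a / l).
    assert (Hx : -1 <= x <= 1).
    { unfold x; split; [apply Rmult_le_reg_r with l | apply Rmult_le_reg_r with l];
        try lra; unfold Rdiv; rewrite Rmult_assoc, Rinv_l by lra; nra. }
    assert (Hs : sqrt (1 - x²) = Rabs b / l).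
    { replace (1 - x²) with (b / l)² by (unfold x, Rsqr; field_simplify_eq; lra).
      rewrite sqrt_Rsqr_abs; unfold Rdiv; rewrite Rabs_mult, Rabs_inv, (Rabs_pos_eq l); lra. }
    destruct (Rle_dec 0 b) as [Hb|Hb].
    + exists (acos x); rewrite cos_acos, sin_acos, Hs, Rabs_pos_eq by lra.
      unfold x; split; field; lra.
    + exists (- acos x); rewrite cos_neg, sin_neg, cos_acos, sin_acos, Hs, Rabs_left by lra.
      unfold x; split; field; lra.
Qed.

Lemma hyperboloid_reverse_cauchy_schwarz k O p : k < 0 -> onM k O -> onM k p ->
  1 <= k * B k O p.
Proof.
  intros Hk HO Hp.
  pose proof (onM_neg k O Hk HO) as HO3; pose proof (onM_neg k p Hk Hp) as Hp3.
  apply onM_neq0 in HO, Hp; try lra.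
  assert (He : eps k = -1) by (unfold eps; destruct (Rlt_dec k 0); lra).
  set (m := - / k).
  assert (Hm : 0 < m) by (unfold m; apply Ropp_0_gt_lt_contravar, Rinv_lt_0_compat, Hk).
  assert (Hkm : k * m = -1) by (unfold m; field; lra).
  destruct O as [[o1 o2] o3], p as [[p1 p2] p3]; unfold B, v1, v2, v3 in *; cbn [fst snd] in *.
  rewrite He in *.
  assert (Ho : o3 * o3 = o1 * o1 + o2 * o2 + m)
    by (apply Rmult_eq_reg_l with k; [rewrite Rmult_plus_distr_l, Hkm; lra | lra]).
  assert (Hq : p3 * p3 = p1 * p1 + p2 * p2 + m)
    by (apply Rmult_eq_reg_l with k; [rewrite Rmult_plus_distr_l, Hkm; lra | lra]).
  (* Lagrange's identity in signature (2,1) *)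
  assert (Hlag : (o3 * p3) * (o3 * p3) - (o1 * p1 + o2 * p2 + m) * (o1 * p1 + o2 * p2 + m)
                 = (o1 * p2 - o2 * p1) ^ 2 + m * ((o1 - p1) ^ 2 + (o2 - p2) ^ 2)).
  { replace ((o3 * p3) * (o3 * p3)) with ((o3 * o3) * (p3 * p3)) by ring; rewrite Ho, Hq; ring. }
  assert (Hdom : o1 * p1 + o2 * p2 + m <= o3 * p3).
  { assert (0 < o3 * p3) by (apply Rmult_lt_0_compat; assumption).
    pose proof (pow2_ge_0 (o1 * p2 - o2 * p1)).
    pose proof (pow2_ge_0 (o1 - p1)); pose proof (pow2_ge_0 (o2 - p2)).
    assert (0 <= m * ((o1 - p1) ^ 2 + (o2 - p2) ^ 2)) by (apply Rmult_le_pos; lra).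
    destruct (Rle_dec (o1 * p1 + o2 * p2 + m) 0); nra. }
  nra.
Qed.

Lemma tangent_decomposition k O p c : onM k O -> onM k p ->
  c = 1 - k * B k (vsub p O) (vsub p O) / 2 ->
  tangent k O (vsub p (vscal c O)) /\
  c ^ 2 + k * B k (vsub p (vscal c O)) (vsub p (vscal c O)) = 1 /\
  (k <= 0 -> 1 <= c).
Proof.
  intros HO Hp Hc; destruct (Req_dec k 0) as [->|Hk].
  - replace c with 1 in * by lra.
    apply onM_0 in HO, Hp; unfold tangent; rewrite nrm_0.
    split; [|split; [ring | lra]]; coords; rewrite eps_0; lra.
  - pose proof (onM_neq0 k O Hk HO) as HOO; pose proof (onM_neq0 k p Hk Hp) as Hpp.
    assert (Hc' : c = k * B k O p).
    { replace (k * B k (vsub p O) (vsub p O))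
        with (k * B k p p - 2 * (k * B k O p) + k * B k O O) in Hc by (coords; ring).
      rewrite HOO, Hpp in Hc; lra. }
    split; [|split].
    + unfold tangent; rewrite nrm_neq0 by exact Hk.
      replace (B k (vscal (sqrt (Rabs k)) O) (vsub p (vscal c O)))
        with (sqrt (Rabs k) * (B k O p - c * B k O O)) by (coords; ring).
      rewrite Hc'; replace (k * B k O p * B k O O) with (B k O p * (k * B k O O)) by ring.
      rewrite HOO; ring.
    + replace (k * B k (vsub p (vscal c O)) (vsub p (vscal c O)))
        with (k * B k p p - 2 * c * (k * B k O p) + c ^ 2 * (k * B k O O)) by (coords; ring).
      rewrite HOO, Hpp, <- Hc'; ring.
    + intros Hk'; rewrite Hc'.
      apply hyperboloid_reverse_cauchy_schwarz; [lra | exact HO | exact Hp].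
Qed.

Lemma polar_exists k O E1 E2 p : onM k O -> frame k O E1 E2 -> onM k p ->
  exists rt, polar k O E1 E2 p rt.
Proof.
  intros HO Hf Hp.
  set (c := 1 - k * B k (vsub p O) (vsub p O) / 2); set (w := vsub p (vscal c O)).
  destruct (tangent_decomposition k O p c HO Hp eq_refl) as [Hw [Hcw Hc1]]; fold w in Hw, Hcw.
  pose proof (frame_expansion k O E1 E2 w HO Hf Hw) as Hexp.
  set (a := B k w E1) in Hexp; set (b := B k w E2) in Hexp.
  assert (Hww : B k w w = a * a + b * b).
  { destruct Hf as [_ [_ [H11 [H22 [H12 _]]]]]; rewrite Hexp.
    clear - H11 H22 H12; coords; set (e := eps k) in *; nsatz. }
  set (l := sqrt (a * a + b * b)).
  assert (Hl : 0 <= l) by apply sqrt_pos.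
  assert (Hll : l * l = a * a + b * b) by (apply sqrt_sqrt; nra).
  assert (Hcl : c ^ 2 + k * l ^ 2 = 1) by (rewrite <- Hcw, Hww, <- Hll; ring).
  destruct (exists_radius k c l Hl Hcl Hc1) as [r [Hr0 [Hrpi [Hrc Hrl]]]].
  destruct (exists_angle a b l Hl ltac:(lra)) as [th [Ha Hb]].
  exists (r, th); split; [|split; assumption]; cbn [fst snd].
  unfold Phi, geod; rewrite Hrc, Hrl.
  replace p with (vadd (vscal c O) w) by (unfold w; apply V3_eq; coords; ring).
  rewrite Hexp, Ha, Hb; apply V3_eq; coords; ring.
Qed.

Lemma polar_of_spec k O E1 E2 p : onM k O -> frame k O E1 E2 -> onM k p ->
  Phi k O E1 E2 (fst (polar_of k O E1 E2 p)) (snd (polar_of k O E1 E2 p)) = p.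
Proof.
  intros HO Hf Hp; unfold polar_of.
  destruct (epsilon_spec (inhabits (0, 0)) (polar k O E1 E2 p) (polar_exists k O E1 E2 p HO Hf Hp))
    as [HPhi _].
  exact HPhi.
Qed.

Lemma Jrot_Jrot k p v : onM k p -> tangent k p v -> Jrot k p (Jrot k p v) = vscal (-1) v.
Proof.
  intros Hp Hv; destruct (Req_dec k 0) as [->|Hk].
  - apply tangent_0 in Hv; unfold Jrot; rewrite nrm_0.
    apply V3_eq; coords; rewrite eps_0; lra.
  - apply onM_neq0 in Hp; [|exact Hk]; apply tangent_neq0 in Hv; [|exact Hk].
    unfold Jrot; rewrite nrm_neq0 by exact Hk.
    pose proof (eps_sqr k); pose proof (sqrt_Rabs_sqr k).
    apply V3_eq; coords; set (e := eps k) in *; set (s := sqrt (Rabs k)) in *; nsatz.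
Qed.

Lemma Jrot_lin k p a b x y :
  Jrot k p (vadd (vscal a x) (vscal b y)) = vadd (vscal a (Jrot k p x)) (vscal b (Jrot k p y)).
Proof. unfold Jrot; set (n := nrm k p); apply V3_eq; coords; ring. Qed.

Lemma Dv_Phi_angle k O E1 E2 r th :
  Dv (fun t => Phi k O E1 E2 r t) th =
  vscal (ell k r) (vadd (vscal (- sin th) E1) (vscal (cos th) E2)).
Proof.
  destruct O as [[? ?] ?], E1 as [[? ?] ?], E2 as [[? ?] ?].
  unfold Dv, Phi, geod; coords.
  f_equal; [f_equal|]; apply is_derive_unique; auto_derive; trivial; ring.
Qed.

Lemma Jrot_Phi_sub k O E1 E2 r th : onM k O -> frame k O E1 E2 ->
  Jrot k (Phi k O E1 E2 r th) (vsub (Phi k O E1 E2 r th) O) =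
  Dv (fun t => Phi k O E1 E2 r t) th.
Proof.
  intros HO [Ht1 [_ [_ [_ [_ HE2]]]]]; rewrite Dv_Phi_angle.
  unfold Phi, geod; set (c := 1 - k * area_a k r); set (l := ell k r).
  set (u := vadd (vscal (cos th) E1) (vscal (sin th) E2)).
  assert (Hbase : Jrot k (vadd (vscal c O) (vscal l u)) (vsub (vadd (vscal c O) (vscal l u)) O)
                  = vscal l (Jrot k O u)).
  { destruct (Req_dec k 0) as [->|Hk].
    - replace c with 1 by (unfold c; ring); unfold Jrot; rewrite !nrm_0.
      apply V3_eq; coords; ring.
    - unfold Jrot; rewrite !nrm_neq0 by exact Hk; apply V3_eq; coords; ring. }
  rewrite Hbase; f_equal; unfold u; rewrite Jrot_lin, HE2, Jrot_Jrot by assumption.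
  apply V3_eq; coords; ring.
Qed.

Lemma frame_unit_direction k O E1 E2 th : frame k O E1 E2 ->
  B k (vadd (vscal (cos th) E1) (vscal (sin th) E2))
      (vadd (vscal (cos th) E1) (vscal (sin th) E2)) = 1.
Proof.
  intros [_ [_ [H11 [H22 [H12 _]]]]]; pose proof (sin2_cos2 th) as Hsc; unfold Rsqr in Hsc.
  replace 1 with (cos th * cos th * B k E1 E1 + sin th * sin th * B k E2 E2
                  + 2 * cos th * sin th * B k E1 E2) by (rewrite H11, H22, H12; lra).
  coords; ring.
Qed.

Lemma area_a_Phi k O E1 E2 r th : onM k O -> frame k O E1 E2 ->
  area_a k r = B k (vsub (Phi k O E1 E2 r th) O) (vsub (Phi k O E1 E2 r th) O) / 2.
Proof.
  intros HO Hf; pose proof (frame_unit_direction k O E1 E2 th Hf) as Hu.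
  destruct Hf as [Ht1 [Ht2 _]].
  unfold Phi, geod; set (u := vadd (vscal (cos th) E1) (vscal (sin th) E2)) in *.
  set (c := 1 - k * area_a k r); set (l := ell k r).
  replace (B k (vsub (vadd (vscal c O) (vscal l u)) O) (vsub (vadd (vscal c O) (vscal l u)) O))
    with ((c - 1) ^ 2 * B k O O + 2 * (c - 1) * l * B k O u + l ^ 2 * B k u u) by (coords; ring).
  rewrite Hu; destruct (Req_dec k 0) as [->|Hk].
  - unfold c, l; rewrite ell_0, area_a_0; field.
  - assert (HOu : B k O u = 0).
    { apply tangent_neq0 in Ht1, Ht2; try exact Hk.
      replace (B k O u) with (cos th * B k O E1 + sin th * B k O E2) by (unfold u; coords; ring).
      rewrite Ht1, Ht2; ring. }
    apply onM_neq0 in HO; [|exact Hk].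
    pose proof (area_a_ell_pythagoras k r) as Hpy; fold c l in Hpy.
    rewrite HOu; apply Rmult_eq_reg_l with k; [|exact Hk].
    replace (k * (((c - 1) ^ 2 * B k O O + 2 * (c - 1) * l * 0 + l ^ 2 * 1) / 2))
      with (((c - 1) ^ 2 * (k * B k O O) + k * l ^ 2) / 2) by field.
    rewrite HO; unfold c in Hpy |- *; lra.
Qed.

Lemma B_nrm_Jrot k p v : B k (nrm k p) (Jrot k p v) = 0.
Proof.
  unfold Jrot; set (n := nrm k p); pose proof (eps_sqr k) as He.
  coords; set (e := eps k) in *; nsatz.
Qed.

Lemma kappa_g_Jrot k g s : kappa_g k g s = B k (Dv (Dv g) s) (Jrot k (g s) (Dv g s)).
Proof.
  unfold kappa_g, covacc; cbv zeta.
  set (n := nrm k (g s)); set (A := Dv (Dv g) s); set (q := B k A n / B k n n).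
  replace (B k (vsub A (vscal q n)) (Jrot k (g s) (Dv g s)))
    with (B k A (Jrot k (g s) (Dv g s)) - q * B k n (Jrot k (g s) (Dv g s))) by (coords; ring).
  unfold n; rewrite B_nrm_Jrot; ring.
Qed.

(* T and J T span the tangent plane; the tangential part of A is <A, J T> J T and, for k <> 0,
   its normal part is -k p, which accounts for the term k <X, X>/2. *)
Lemma curvature_chord_identity k O p T A : onM k O -> onM k p -> tangent k p T ->
  B k T T = 1 -> B k A T = 0 -> (k <> 0 -> B k A p = -1) ->
  B k T (Jrot k p (vsub p O)) * B k A (Jrot k p T) + k * (B k (vsub p O) (vsub p O) / 2)
  = - B k A (vsub p O).
Proof.
  intros HO Hp HT HTT HAT HAp; destruct (Req_dec k 0) as [->|Hk].
  - apply onM_0 in HO, Hp; apply tangent_0 in HT.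
    unfold Jrot; rewrite !nrm_0; coords; rewrite eps_0 in *; subst; nsatz.
  - specialize (HAp Hk).
    apply onM_neq0 in HO, Hp; try exact Hk; apply tangent_neq0 in HT; [|exact Hk].
    assert (Hchord : k * (B k (vsub p O) (vsub p O) / 2) = 1 - k * B k O p).
    { replace (k * (B k (vsub p O) (vsub p O) / 2))
        with ((k * B k p p + k * B k O O) / 2 - k * B k O p) by (coords; field).
      rewrite HO, Hp; field. }
    rewrite Hchord; clear HO Hchord.
    replace (B k A (vsub p O)) with (B k A p - B k A O) by (coords; ring).
    replace (Jrot k p (vsub p O)) with (vscal (-1) (Jrot k p O))
      by (unfold Jrot; rewrite nrm_neq0 by exact Hk; apply V3_eq; coords; ring).
    rewrite HAp; unfold Jrot; rewrite nrm_neq0 by exact Hk.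
    pose proof (eps_sqr k); pose proof (sqrt_Rabs_sqr k).
    coords; set (e := eps k) in *; set (s := sqrt (Rabs k)) in *; nsatz.
Qed.

Definition vder (x : R -> V3) (s : R) (x' : V3) : Prop :=
  is_derive (fun t => v1 (x t)) s (v1 x') /\ is_derive (fun t => v2 (x t)) s (v2 x') /\
  is_derive (fun t => v3 (x t)) s (v3 x').

Definition vcont (x : R -> V3) (s : R) : Prop :=
  continuous (fun t => v1 (x t)) s /\ continuous (fun t => v2 (x t)) s /\
  continuous (fun t => v3 (x t)) s.

Lemma is_derive_B k x y s x' y' : vder x s x' -> vder y s y' ->
  is_derive (fun t => B k (x t) (y t)) s (B k x' (y s) + B k (x s) y').
Proof.
  intros [X1 [X2 X3]] [Y1 [Y2 Y3]].
  assert (Hmul : forall (F G : R -> R) (df dg : R), is_derive F s df -> is_derive G s dg ->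
            is_derive (fun t => F t * G t) s (df * G s + F s * dg))
    by (intros; apply (is_derive_mult (K := R_AbsRing)); auto; intros; apply Rmult_comm).
  replace (B k x' (y s) + B k (x s) y') with
    (v1 x' * v1 (y s) + v1 (x s) * v1 y' + (v2 x' * v2 (y s) + v2 (x s) * v2 y')
     + eps k * (v3 x' * v3 (y s) + v3 (x s) * v3 y'))
    by (unfold B; ring).
  unfold B; apply (is_derive_plus (V := R_NormedModule)).
  - apply (is_derive_plus (V := R_NormedModule)); apply Hmul; assumption.
  - apply (is_derive_scal (fun t => v3 (x t) * v3 (y t))); apply Hmul; assumption.
Qed.

Lemma continuous_B k x y s : vcont x s -> vcont y s -> continuous (fun t => B k (x t) (y t)) s.
Proof.
  intros [X1 [X2 X3]] [Y1 [Y2 Y3]].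
  assert (Hmul : forall F G : R -> R, continuous F s -> continuous G s ->
            continuous (fun t => F t * G t) s)
    by (intros F G HF HG; apply (continuous_mult F G); assumption).
  unfold B; apply (continuous_plus (V := R_NormedModule)).
  - apply (continuous_plus (V := R_NormedModule)); apply Hmul; assumption.
  - apply (Hmul (fun _ => eps k)); [apply continuous_const | apply Hmul; assumption].
Qed.

Lemma vder_sub_const x c s x' : vder x s x' -> vder (fun t => vsub (x t) c) s x'.
Proof.
  intros [X1 [X2 X3]].
  assert (Hshift : forall (F : R -> R) d a, is_derive F s d -> is_derive (fun t => F t + a) s d).
  { intros F d a HF; rewrite <- (Rplus_0_r d).
    apply (is_derive_plus (V := R_NormedModule));
      [exact HF | apply (@is_derive_const R_AbsRing R_NormedModule)]. }
  split; [|split]; apply Hshift; assumption.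
Qed.

Lemma vcont_sub_const x c s : vcont x s -> vcont (fun t => vsub (x t) c) s.
Proof.
  intros [X1 [X2 X3]].
  assert (Hshift : forall (F : R -> R) a, continuous F s -> continuous (fun t => F t + a) s)
    by (intros F a HF; apply (continuous_plus (V := R_NormedModule));
        [exact HF | apply continuous_const]).
  split; [|split]; apply Hshift; assumption.
Qed.

Lemma area_a_rho k O E1 E2 p : onM k O -> frame k O E1 E2 -> onM k p ->
  area_a k (rho k O E1 E2 p) = B k (vsub p O) (vsub p O) / 2.
Proof.
  intros HO Hf Hp; unfold rho.
  rewrite (area_a_Phi k O E1 E2 _ (snd (polar_of k O E1 E2 p)) HO Hf).
  rewrite polar_of_spec by assumption; reflexivity.
Qed.

Lemma ell2dtheta_Jrot k O E1 E2 p v : onM k O -> frame k O E1 E2 -> onM k p ->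
  ell2dtheta k O E1 E2 p v = B k v (Jrot k p (vsub p O)).
Proof.
  intros HO Hf Hp; unfold ell2dtheta; cbv zeta.
  rewrite <- Jrot_Phi_sub, polar_of_spec by assumption; reflexivity.
Qed.

Lemma derive_const_fun (F : R -> R) (c s d : R) : (forall t, F t = c) -> is_derive F s d -> d = 0.
Proof.
  intros HF Hd; apply is_derive_unique in Hd; rewrite <- Hd.
  rewrite (Derive_ext F (fun _ => c)) by exact HF; apply Derive_const.
Qed.

Lemma RInt_one_sub_derive_periodic (f df : R -> R) (L : R) :
  (forall s, is_derive f s (df s)) -> (forall s, continuous df s) -> f L = f 0 ->
  RInt (fun s => 1 - df s) 0 L = L.
Proof.
  intros Hf Hdf Hper.
  assert (Hdf_int : is_RInt df 0 L (minus (f L) (f 0)))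
    by (apply (is_RInt_derive (V := R_CompleteNormedModule)); intros; auto).
  apply (is_RInt_unique (V := R_CompleteNormedModule)).
  assert (Hval : L = minus (scal (L - 0) 1) (minus (f L) (f 0)))
    by (rewrite Hper; unfold minus, plus, opp, scal; simpl; unfold mult; simpl; ring).
  rewrite Hval at 2.
  apply (is_RInt_minus (V := R_CompleteNormedModule));
    [apply (is_RInt_const (V := R_CompleteNormedModule)) | exact Hdf_int].
Qed.

Lemma RInt_add_scal_periodic (g1 g2 f df : R -> R) (c L : R) :
  (forall s, is_derive f s (df s)) -> (forall s, continuous df s) -> f L = f 0 ->
  (forall s, continuous g2 s) -> (forall s, g1 s + c * g2 s = 1 - df s) ->
  RInt g1 0 L + c * RInt g2 0 L = L.
Proof.
  intros Hf Hdf Hper Hg2 Hg1.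
  assert (Hint2 : ex_RInt g2 0 L)
    by (apply (ex_RInt_continuous (V := R_CompleteNormedModule)); intros; apply Hg2).
  assert (Hint : ex_RInt (fun s => 1 - df s) 0 L).
  { apply (ex_RInt_continuous (V := R_CompleteNormedModule)); intros s _.
    apply (continuous_minus (V := R_NormedModule)); [apply continuous_const | apply Hdf]. }
  rewrite (RInt_ext g1 (fun s => minus (1 - df s) (scal c (g2 s))))
    by (intros s _; change (g1 s = 1 - df s - c * g2 s); rewrite <- Hg1; ring).
  rewrite (RInt_minus (V := R_CompleteNormedModule));
    [| exact Hint | exact (ex_RInt_scal (V := R_CompleteNormedModule) _ _ _ c Hint2)].
  rewrite (RInt_scal (V := R_CompleteNormedModule)) by exact Hint2.
  rewrite (RInt_one_sub_derive_periodic f df L Hf Hdf Hper).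
  change (L - c * RInt g2 0 L + c * RInt g2 0 L = L); ring.
Qed.

Section UnitSpeedCurve.

Variable k : R.
Variable gam : R -> V3.
Hypothesis gam_C2 : C2curve gam.
Hypothesis gam_onM : forall s, onM k (gam s).
Hypothesis gam_unit : forall s, B k (Dv gam s) (Dv gam s) = 1.

Lemma vder_curve s : vder gam s (Dv gam s).
Proof.
  destruct gam_C2 as [[H1 _] [[H2 _] [H3 _]]].
  split; [|split]; apply Derive_correct; auto.
Qed.

Lemma vder_Dv s : vder (Dv gam) s (Dv (Dv gam) s).
Proof.
  destruct gam_C2 as [[_ [H1 _]] [[_ [H2 _]] [_ [H3 _]]]].
  split; [|split]; apply Derive_correct; auto.
Qed.

Lemma vcont_curve s : vcont gam s.
Proof.
  destruct gam_C2 as [[H1 _] [[H2 _] [H3 _]]].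
  split; [|split]; apply (ex_derive_continuous (V := R_NormedModule)); auto.
Qed.

Lemma vcont_Dv s : vcont (Dv gam) s.
Proof.
  destruct gam_C2 as [[_ [H1 _]] [[_ [H2 _]] [_ [H3 _]]]].
  split; [|split]; apply (ex_derive_continuous (V := R_NormedModule)); auto.
Qed.

Lemma vcont_Dv_Dv s : vcont (Dv (Dv gam)) s.
Proof.
  destruct gam_C2 as [[_ [_ H1]] [[_ [_ H2]] [_ [_ H3]]]].
  split; [|split]; auto.
Qed.

Lemma Dv_periodic L : (forall s, gam (s + L) = gam s) -> Dv gam L = Dv gam 0.
Proof.
  intros Hper.
  assert (Hshift : forall g : R -> R, (forall t, g (t + L) = g t) -> ex_derive g L ->
            Derive g L = Derive g 0).
  { intros g Hg Hd.
    rewrite <- (Derive_ext (fun t => g (t + L)) g 0 Hg).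
    symmetry; apply is_derive_unique.
    rewrite <- (Rmult_1_l (Derive g L)).
    apply (is_derive_comp g (fun t => t + L)).
    - rewrite Rplus_0_l; apply Derive_correct, Hd.
    - auto_derive; trivial. }
  destruct gam_C2 as [[H1 _] [[H2 _] [H3 _]]].
  unfold Dv; f_equal; apply Hshift; auto; intros t; rewrite Hper; reflexivity.
Qed.

Lemma B_Dv_Dv_Dv s : B k (Dv (Dv gam) s) (Dv gam s) = 0.
Proof.
  pose proof (is_derive_B k _ _ s _ _ (vder_Dv s) (vder_Dv s)) as Hd.
  apply (derive_const_fun _ 1) in Hd; [|exact gam_unit].
  replace (B k (Dv gam s) (Dv (Dv gam) s)) with (B k (Dv (Dv gam) s) (Dv gam s)) in Hd
    by (unfold B; ring).
  lra.
Qed.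

Lemma B_curve_Dv s : k <> 0 -> B k (gam s) (Dv gam s) = 0.
Proof.
  intros Hk; pose proof (is_derive_B k _ _ s _ _ (vder_curve s) (vder_curve s)) as Hd.
  apply (derive_const_fun _ (/ k)) in Hd.
  - replace (B k (Dv gam s) (gam s)) with (B k (gam s) (Dv gam s)) in Hd by (unfold B; ring).
    lra.
  - intros t; apply Rmult_eq_reg_l with k; [|exact Hk].
    rewrite (onM_neq0 k _ Hk (gam_onM t)); field; exact Hk.
Qed.

Lemma Dv_tangent s : tangent k (gam s) (Dv gam s).
Proof.
  unfold tangent; destruct (Req_dec k 0) as [->|Hk].
  - rewrite nrm_0; destruct (vder_curve s) as [_ [_ Hd3]].
    apply (derive_const_fun _ 0) in Hd3; [|intros t; apply onM_0, gam_onM].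
    unfold B, mkV, v1, v2, v3 in *; cbn [fst snd] in *; rewrite Hd3; ring.
  - rewrite nrm_neq0 by exact Hk.
    replace (B k (vscal (sqrt (Rabs k)) (gam s)) (Dv gam s))
      with (sqrt (Rabs k) * B k (gam s) (Dv gam s))
      by (unfold B, vscal, v1, v2, v3, mkV; simpl; ring).
    rewrite B_curve_Dv by exact Hk; ring.
Qed.

Lemma B_Dv_Dv_curve s : k <> 0 -> B k (Dv (Dv gam) s) (gam s) = -1.
Proof.
  intros Hk; pose proof (is_derive_B k _ _ s _ _ (vder_Dv s) (vder_curve s)) as Hd.
  apply (derive_const_fun _ 0) in Hd.
  - rewrite gam_unit in Hd; lra.
  - intros t; replace (B k (Dv gam t) (gam t)) with (B k (gam t) (Dv gam t)) by (unfold B; ring).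
    apply B_curve_Dv, Hk.
Qed.

Lemma boundary_integrand_eq O E1 E2 s : onM k O -> frame k O E1 E2 ->
  ell2dtheta k O E1 E2 (gam s) (Dv gam s) * kappa_g k gam s
  = - B k (Dv (Dv gam) s) (vsub (gam s) O) - k * (B k (vsub (gam s) O) (vsub (gam s) O) / 2).
Proof.
  intros HO Hf.
  rewrite ell2dtheta_Jrot, kappa_g_Jrot by auto.
  pose proof (curvature_chord_identity k O (gam s) (Dv gam s) (Dv (Dv gam) s) HO (gam_onM s)
                (Dv_tangent s) (gam_unit s) (B_Dv_Dv_Dv s) (B_Dv_Dv_curve s)).
  lra.
Qed.

Lemma boundary_component_length O E1 E2 L : onM k O -> frame k O E1 E2 ->
  (forall s, gam (s + L) = gam s) ->
  RInt (fun s => ell2dtheta k O E1 E2 (gam s) (Dv gam s) * kappa_g k gam s) 0 L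
  + k * RInt (fun s => area_a k (rho k O E1 E2 (gam s))) 0 L = L.
Proof.
  intros HO Hf Hper.
  set (X := fun s => vsub (gam s) O).
  rewrite (RInt_ext (fun s => area_a k (rho k O E1 E2 (gam s))) (fun s => B k (X s) (X s) / 2))
    by (intros s _; apply area_a_rho; auto).
  apply (RInt_add_scal_periodic _ _ (fun s => B k (Dv gam s) (X s))
           (fun s => B k (Dv (Dv gam) s) (X s) + B k (Dv gam s) (Dv gam s))).
  - intros s; apply is_derive_B; [apply vder_Dv | apply vder_sub_const, vder_curve].
  - intros s; apply (continuous_plus (V := R_NormedModule)); apply continuous_B.
    + apply vcont_Dv_Dv.
    + apply vcont_sub_const, vcont_curve.
    + apply vcont_Dv.
    + apply vcont_Dv.
  - unfold X; rewrite (Dv_periodic L Hper), <- (Rplus_0_l L), Hper; reflexivity.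
  - intros s; apply (continuous_mult (fun t => B k (X t) (X t)) (fun _ => / 2));
      [apply continuous_B; apply vcont_sub_const, vcont_curve | apply continuous_const].
  - intros s; rewrite boundary_integrand_eq by assumption.
    unfold X; rewrite gam_unit; ring.
Qed.

End UnitSpeedCurve.

Lemma sumR_add_scal n (F G H : nat -> R) (c : R) :
  (forall i, (i < n)%nat -> F i = G i + c * H i) -> sumR n F = sumR n G + c * sumR n H.
Proof.
  induction n as [|n IH]; intros HFGH; simpl; [ring|].
  rewrite IH by (intros i Hi; apply HFGH; lia).
  rewrite (HFGH n) by lia; ring.
Qed.

Theorem theorem2p1 (k : R) (O E1 E2 : V3) (K : V3 -> Prop) (n : nat)
  (L : nat -> R) (gam : nat -> R -> V3) :
  onM k O -> frame k O E1 E2 ->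
  compact_region_C2_boundary k K n L gam ->
  perimeter n L =
    sumR n (fun i => RInt (fun s => ell2dtheta k O E1 E2 (gam i s) (Dv (gam i) s)
                                    * kappa_g k (gam i) s) 0 (L i))
    + k * sumR n (fun i => RInt (fun s => area_a k (rho k O E1 E2 (gam i s))) 0 (L i)).
Proof.
  intros HO Hf [_ [_ [_ [Hcurves _]]]].
  unfold perimeter; apply sumR_add_scal; intros i Hi.
  destruct (Hcurves i Hi) as [_ [HC [Hon [Hper [Hunit _]]]]].
  symmetry; apply boundary_component_length; assumption.
Qed.
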